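(* Let $p\in(0,1/2)$, let $n\ge k\ge 1$ be integers and let $\delta\in(0,1)$. Consider any variable-length algorithm for computing $\mathsf{TH}_k(\mathbf{x})$ from noisy queries whose number of queries $M$ satisfies \[ \mathbb{E}[M\mid\mathbf{x}]\le\frac{(n-k+1)\log\frac{1}{4\delta}}{D_{\mathsf{KL}}(p\|1-p)} \] for every input instance $\mathbf{x}\in\{0,1\}^n$. Then the worst-case error probability of the algorithm, $\max_{\mathbf{x}\in\{0,1\}^n}\mathbb{P}(\widehat{\mathsf{TH}}_k\neq\mathsf{TH}_k(\mathbf{x})\mid\mathbf{x})$, is at least $\delta$.
   Context: For $\mathbf{x}=(x_1,\dots,x_n)\in\{0,1\}^n$, $\mathsf{TH}_k(\mathbf{x})=1$ if $\sum_i x_i\ge k$ and $0$ otherwise. Noisy query model: at each time step the algorithm chooses an index $i\in[n]$ (possibly depending on all previous responses) and observes $x_i\oplus Z$, where $Z\sim\mathsf{Bern}(p)$ is independent of everything else; $p$ is known. A variable-length algorithm may stop adaptively (so $M$ is random) and then outputs an estimate $\widehat{\mathsf{TH}}_k\in\{0,1\}$. $D_{\mathsf{KL}}(p\|1-p)=(1-2p)\log\frac{1-p}{p}$; $\log$ is the natural logarithm. *)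

From HB Require Import structures.
From mathcomp Require Import all_boot all_order all_algebra.
From mathcomp Require Import all_classical all_reals all_analysis.
Set Implicit Arguments. Unset Strict Implicit. Unset Printing Implicit Defensive.
Import Order.TTheory GRing.Theory Num.Theory.
Local Open Scope ring_scope.

Section NoisyQuery.
Variable R : realType.
Variable n : nat.

Definition input := {ffun 'I_n -> bool}.

Definition TH (k : nat) (x : input) : bool := (k <= \sum_(i < n) x i)%N.

(* one observation: queried index and the noisy answer x_i xor Z *)
Definition obs := ('I_n * bool)%type.

(* an action: inl b = stop and output b ; inr i = query index i *)
Definition action := (bool + 'I_n)%type.

(* a (possibly randomized) adaptive variable-length algorithm: given the
   history of (query, response) pairs, a probability distribution over
   the next action.  Deterministic algorithms are the 0/1-valued case. *)
Definition policy := seq obs -> {ffun action -> R}.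

Definition valid_policy (A : policy) : Prop :=
  forall h, (forall a, 0 <= A h a) /\ \sum_(a : action) A h a = 1.

(* probability of response o.2 when querying o.1 on input x: x_i xor Z,
   Z ~ Bern(p) *)
Definition chan (p : R) (x : input) (o : obs) : R :=
  if o.2 == x o.1 then 1 - p else p.

(* probability that the run of A on x produces (as its first |h| steps)
   exactly the history h *)
Fixpoint reach_aux (p : R) (A : policy) (x : input) (pre h : seq obs) : R :=
  match h with
  | [::] => 1
  | o :: h' => A pre (inr o.1) * chan p x o * reach_aux p A x (rcons pre o) h'
  end.

Definition reach p A x (h : seq obs) : R := reach_aux p A x [::] h.

(* P(M = m and output = b | x) *)
Definition P_stop_out p A x (m : nat) (b : bool) : R :=
  \sum_(t : m.-tuple obs) reach p A x t * A t (inl b).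

Definition P_stop p A x (m : nat) : R :=
  P_stop_out p A x m false + P_stop_out p A x m true.

Definition P_term p A x : \bar R := (\sum_(0 <= m <oo) (P_stop p A x m)%:E)%E.

(* E[M | x]  (= +oo when the algorithm fails to stop with positive prob.) *)
Definition expected_queries p A x : \bar R :=
  if (P_term p A x < 1%E)%E then +oo%E
  else (\sum_(0 <= m <oo) ((m%:R * P_stop p A x m)%:E))%E.

Definition Perr p A (k : nat) x : \bar R :=
  (\sum_(0 <= m <oo) (P_stop_out p A x m (~~ TH k x))%:E)%E.

End NoisyQuery.

(* D_KL(p || 1-p) = (1-2p) log((1-p)/p) *)
Definition DKL {R : realType} (p : R) : R := (1 - 2 * p) * ln ((1 - p) / p).

From HB Require Import structures.
From mathcomp Require Import all_boot all_order all_algebra.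
From mathcomp Require Import all_classical all_reals all_analysis.
From mathcomp Require Import ring lra.
Import Order.TTheory GRing.Theory Num.Theory.
Set Implicit Arguments. Unset Strict Implicit.
Local Open Scope ring_scope.

(* Take an input x with k - 1 ones, so that TH_k(x) = 0; raising any of its n - k + 1 zeros
   gives an input y with TH_k(y) = 1.  The expected number of queries is at most
   (n - k + 1) ln(1/(4 delta)) / D, so some zero coordinate i is queried on average at most
   ln(1/(4 delta)) / D times, and by Wald's identity the expected log-likelihood ratio between
   x and y (which only sees answers about i) is at most ln(1/(4 delta)).  Jensen's inequality
   then bounds the Bhattacharyya coefficient E_x[exp(-llr/2)] below by 2 sqrt(delta), and Le
   Cam's two-point inequality gives P_x(error) + P_y(error) >= 2 delta.  Runs are truncated
   after N queries throughout; the truncated mass vanishes as N grows because E[M] is finite,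
   which is why a uniform gap below delta is extracted over all inputs first. *)

Section TupleSums.
Variables (V : nmodType) (T : finType).

Lemma sum_tuple0 (F : seq T -> V) : \sum_(t : 0.-tuple T) F t = F [::].
Proof.
rewrite (eq_bigr (fun _ => F [::])); last by move=> t _; rewrite tuple0.
by rewrite sumr_const card_tuple expn0.
Qed.

Lemma sum_tuple_recl N (F : seq T -> V) :
  \sum_(t : N.+1.-tuple T) F t = \sum_(o : T) \sum_(t : N.-tuple T) F (o :: t).
Proof.
rewrite pair_bigA /= (reindex (fun ot : T * N.-tuple T => [tuple of ot.1 :: ot.2])) //=.
exists (fun t : N.+1.-tuple T => (thead t, [tuple of behead t])).
  by move=> [a b] _ /=; congr pair; apply: val_inj.
by move=> t _; rewrite [RHS]tuple_eta.
Qed.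

Lemma sum_tuple_recr N (F : seq T -> V) :
  \sum_(t : N.+1.-tuple T) F t = \sum_(t : N.-tuple T) \sum_(o : T) F (rcons t o).
Proof.
elim: N F => [|N IH] F.
  rewrite sum_tuple_recl (sum_tuple0 (fun s => \sum_o F (rcons s o))).
  by apply: eq_bigr => o _; rewrite (sum_tuple0 (fun s => F (o :: s))).
rewrite sum_tuple_recl (@sum_tuple_recl N (fun s => \sum_o F (rcons s o))).
by apply: eq_bigr => o _; rewrite (IH (fun s => F (o :: s))).
Qed.

End TupleSums.

Lemma sum_le_nneseries (R : realType) (u : nat -> R) K : (forall m, 0 <= u m) ->
  ((\sum_(m < K) u m)%:E <= \sum_(0 <= m <oo) (u m)%:E)%E.
Proof.
move=> u_ge0; rewrite -sumEFin -(big_mkord xpredT (fun m => (u m)%:E)).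
by apply: nneseries_lim_ge => m _ _; rewrite lee_fin.
Qed.

Lemma nneseries_le (R : realType) (u : nat -> R) (c : R) : (forall m, 0 <= u m) ->
  (forall K, \sum_(m < K) u m <= c) -> (\sum_(0 <= m <oo) (u m)%:E <= c%:E)%E.
Proof.
move=> u_ge0 le_c; apply: lime_le.
  by apply: is_cvg_nneseries => m _ _; rewrite lee_fin.
by apply: nearW => K; rewrite sumEFin big_mkord lee_fin.
Qed.

Lemma ereal_uniform_gap (R : realType) (T : finType) (f : T -> \bar R) (c : R) :
  T -> (forall t, (f t < c%:E)%E) -> exists2 g, 0 < g & forall t, (f t <= (c - g)%:E)%E.
Proof.
move=> t0 f_lt; have [tm _ tm_max] := @arg_maxP _ _ _ t0 xpredT f isT.
have := f_lt tm; case: (f tm) tm_max => [r | | ] tm_max.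
- rewrite lte_fin => lt_rc; exists (c - r); first by rewrite subr_gt0.
  by move=> t; rewrite opprB addrC subrK; apply: tm_max.
- by rewrite ltNge leey.
- by move=> _; exists 1 => // t; apply: le_trans (tm_max t isT) (leNye _).
Qed.

Section Runs.
Variables (R : realType) (n : nat) (p : R) (A : policy R n).
Hypotheses (p_gt0 : 0 < p) (p_lt1 : p < 1) (A_valid : valid_policy A).
Implicit Types (x : input n) (t : seq (obs n)) (o : obs n).

Definition stop_mass t := A t (inl false) + A t (inl true).
Definition query_mass t := \sum_(j : 'I_n) A t (inr j).

(* P(M >= m | x) *)
Definition survival x m := \sum_(t : m.-tuple (obs n)) reach p A x t.

Lemma policy_ge0 t a : 0 <= A t a.
Proof. by case: (A_valid t) => ->. Qed.

Lemma stop_massD_query_mass t : stop_mass t + query_mass t = 1.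
Proof.
case: (A_valid t) => _ <-.
by rewrite big_sumType /= big_bool /stop_mass /query_mass [A t (inl false) + _]addrC.
Qed.

Lemma chan_ge0 x o : 0 <= chan p x o.
Proof. by rewrite /chan; case: ifP => _; rewrite ?subr_ge0 ltW. Qed.

Lemma sum_chan x j : \sum_(b : bool) chan p x (j, b) = 1.
Proof. by rewrite big_bool /chan /=; case: (x j) => /=; rewrite ?subrK // addrC subrK. Qed.

Lemma reach_ge0 x t : 0 <= reach p A x t.
Proof.
rewrite /reach; move: [::]; elim: t => [|o t IH] pre /=; first exact: ler01.
by rewrite !mulr_ge0 ?policy_ge0 ?chan_ge0.
Qed.

Lemma reach_rcons x t o :
  reach p A x (rcons t o) = reach p A x t * A t (inr o.1) * chan p x o.
Proof.
rewrite /reach -[t in A t]cat0s; move: [::]; elim: t => [|o' t IH] pre /=.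
  by rewrite cats0 !mulr1 mul1r.
by rewrite IH cat_rcons !mulrA.
Qed.

Lemma sum_obsE x t (G : obs n -> R) :
  \sum_o A t (inr o.1) * chan p x o * G o =
  \sum_(j : 'I_n) A t (inr j) * \sum_(b : bool) chan p x (j, b) * G (j, b).
Proof.
under [RHS]eq_bigr do rewrite mulr_sumr.
rewrite pair_bigA /=.
by apply: eq_bigr => -[j b] _; rewrite mulrA.
Qed.

Lemma sum_reach_recr x N (G : seq (obs n) -> R) :
  \sum_(t : N.+1.-tuple (obs n)) reach p A x t * G t =
  \sum_(t : N.-tuple (obs n)) reach p A x t *
     \sum_o A t (inr o.1) * chan p x o * G (rcons t o).
Proof.
rewrite (@sum_tuple_recr _ _ N (fun s => reach p A x s * G s)).
apply: eq_bigr => t _; rewrite mulr_sumr; apply: eq_bigr => o _.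
by rewrite reach_rcons !mulrA.
Qed.

Lemma survivalS_query x N :
  survival x N.+1 = \sum_(t : N.-tuple (obs n)) reach p A x t * query_mass t.
Proof.
rewrite /survival; under eq_bigr do rewrite -[reach _ _ _ _]mulr1.
rewrite (sum_reach_recr x N (fun=> 1)); apply: eq_bigr => t _; congr (_ * _).
rewrite sum_obsE; apply: eq_bigr => j _.
by under eq_bigr do rewrite mulr1; rewrite sum_chan mulr1.
Qed.

Lemma P_stopE x m :
  P_stop p A x m = \sum_(t : m.-tuple (obs n)) reach p A x t * stop_mass t.
Proof. by rewrite /P_stop /P_stop_out -big_split; apply: eq_bigr => t _; rewrite mulrDr. Qed.

Lemma survival0 x : survival x 0 = 1.
Proof. exact: (sum_tuple0 (reach p A x)). Qed.

Lemma sum_P_stopD_survival x N : \sum_(m < N) P_stop p A x m + survival x N = 1.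
Proof.
elim: N => [|N IH]; first by rewrite big_ord0 add0r survival0.
rewrite big_ord_recr /= survivalS_query P_stopE -addrA -big_split /= -[RHS]IH.
by congr (_ + _); apply: eq_bigr => t _; rewrite -mulrDr stop_massD_query_mass mulr1.
Qed.

Lemma survivalS x m : survival x m.+1 = survival x m - P_stop p A x m.
Proof.
have := sum_P_stopD_survival x m.+1; have := sum_P_stopD_survival x m.
rewrite big_ord_recr /=; lra.
Qed.

Lemma P_stop_out_ge0 x m b : 0 <= P_stop_out p A x m b.
Proof. by apply: sumr_ge0 => t _; rewrite mulr_ge0 ?reach_ge0 ?policy_ge0. Qed.

Lemma P_stop_ge0 x m : 0 <= P_stop p A x m.
Proof. by rewrite addr_ge0 ?P_stop_out_ge0. Qed.

Lemma survival_nonincr x : {homo survival x : m m' / (m <= m')%N >-> m' <= m}.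
Proof.
apply: homo_leq => [a|a b c h1 h2|m]; [exact: lexx | exact: le_trans h2 h1 |].
by rewrite survivalS gerBl P_stop_ge0.
Qed.

Lemma Perr_ge_sum k x N :
  ((\sum_(m < N) P_stop_out p A x m (~~ TH k x))%:E <= Perr p A k x)%E.
Proof. by apply: sum_le_nneseries => m; apply: P_stop_out_ge0. Qed.

(* the expected number of queries of coordinate j among the first N queries *)
Definition query_count x j N :=
  \sum_(m < N) \sum_(t : m.-tuple (obs n)) reach p A x t * A t (inr j).

Lemma query_count_ge0 x j N : 0 <= query_count x j N.
Proof.
by do 2![apply: sumr_ge0 => ? _]; rewrite mulr_ge0 ?reach_ge0 ?policy_ge0.
Qed.

Lemma sum_query_count x N :
  \sum_(j : 'I_n) query_count x j N = \sum_(m < N) survival x m.+1.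
Proof.
rewrite exchange_big; apply: eq_bigr => m _.
rewrite exchange_big survivalS_query; apply: eq_bigr => t _.
by rewrite mulr_sumr.
Qed.

Lemma sum_survivalE x N :
  \sum_(m < N) survival x m.+1 =
  \sum_(m < N) m%:R * P_stop p A x m + N%:R * survival x N.
Proof.
elim: N => [|N IH]; first by rewrite !big_ord0 mul0r addr0.
rewrite !big_ord_recr /= IH !survivalS -natr1; ring.
Qed.

Lemma sum_survival_le x N K : (N <= K)%N ->
  \sum_(m < N) survival x m.+1 <=
  \sum_(m < K) m%:R * P_stop p A x m + N%:R * survival x K.
Proof.
elim: K => [|K IH]; first by rewrite leqn0 => /eqP->; rewrite sum_survivalE.
rewrite leq_eqVlt ltnS => /orP[/eqP-> | le_NK]; first by rewrite sum_survivalE.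
apply: le_trans (IH le_NK) _; rewrite big_ord_recr survivalS /=.
have : 0 <= (K%:R - N%:R) * P_stop p A x K by rewrite mulr_ge0 ?subr_ge0 ?ler_nat ?P_stop_ge0.
lra.
Qed.

Section BoundedExpectation.
Variable B : R.
Hypothesis EM_le : forall x, (expected_queries p A x <= B%:E)%E.

Lemma P_term_ge1 x : (1 <= P_term p A x)%E.
Proof.
have := EM_le x; rewrite /expected_queries; case: ifP => [_|].
  by move/le_gtF; rewrite ltey.
by move=> /negbT; rewrite -leNgt.
Qed.

Lemma sum_mul_P_stop_le x K : \sum_(m < K) m%:R * P_stop p A x m <= B.
Proof.
have := EM_le x; rewrite /expected_queries ltNge P_term_ge1 /= => EM_le'.
by rewrite -lee_fin (le_trans _ EM_le') // sum_le_nneseries // => m; rewrite mulr_ge0 ?P_stop_ge0.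
Qed.

Lemma survival_vanishes x eps : 0 < eps -> exists K, survival x K <= eps.
Proof.
move=> eps_gt0; apply: contrapT => /forallNP surv_gt.
have sum_le K : \sum_(m < K) P_stop p A x m <= 1 - eps.
  have := sum_P_stopD_survival x K; have /negP := surv_gt K; rewrite -ltNge; lra.
have := le_trans (P_term_ge1 x) (nneseries_le (P_stop_ge0 x) sum_le).
rewrite lee_fin; lra.
Qed.

Lemma sum_survival_le_budget x N : \sum_(m < N) survival x m.+1 <= B.
Proof.
apply/ler_addgt0Pr => e e_gt0.
have N1_gt0 : 0 < N%:R + 1 :> R by rewrite ltr_wpDl.
have [K0 surv_K0] := survival_vanishes x (divr_gt0 e_gt0 N1_gt0).
set K := maxn N K0.
have surv_K : survival x K <= e / (N%:R + 1).
  exact: le_trans (survival_nonincr x (leq_maxr N K0)) surv_K0.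
have Ne : N%:R * (e / (N%:R + 1)) <= e.
  by rewrite mulrA ler_pdivrMr // mulrC ler_pM2l // lerDl.
have := sum_survival_le x (leq_maxl N K0); have := sum_mul_P_stop_le x K.
have := ler_wpM2l (ler0n R N) surv_K; lra.
Qed.

Lemma exists_rare_query x N (S : pred 'I_n) j0 : j0 \in S ->
  exists2 i, i \in S & #|S|%:R * query_count x i N <= B.
Proof.
move=> S_j0; have [i S_i i_min] := arg_minP (fun j => query_count x j N) S_j0.
exists i => //; apply: le_trans (sum_survival_le_budget x N).
rewrite -sum_query_count (bigID (mem S)) /= -[X in X <= _]addr0 lerD ?sumr_ge0 //.
  by rewrite -sum1_card natr_sum mulr_suml ler_sum // => j /i_min; rewrite mul1r.
by move=> j _; apply: query_count_ge0.
Qed.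

End BoundedExpectation.
End Runs.

Lemma mulr2_le_scaled_sqr (F : realFieldType) (a u v : F) : 0 < a ->
  2 * (u * v) <= a * u ^+ 2 + v ^+ 2 / a.
Proof.
move=> a_gt0; rewrite -subr_ge0.
have -> : a * u ^+ 2 + v ^+ 2 / a - 2 * (u * v) = (a * u - v) ^+ 2 / a.
  by field; rewrite gt_eqF.
by rewrite divr_ge0 ?sqr_ge0 ?ltW.
Qed.

Lemma two_point_amgm (F : realFieldType) (r w0 w1 s a : F) :
  0 <= r -> 0 <= w0 -> 0 <= w1 -> 0 < a ->
  2 * (r * (w0 + w1) * s) <=
  a * (r * w0 + r * s ^+ 2 * w1) + (r + r * s ^+ 2) * (w0 + w1) / a.
Proof.
move=> r_ge0 w0_ge0 w1_ge0 a_gt0.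
have le0 := ler_wpM2l (mulr_ge0 r_ge0 w0_ge0) (mulr2_le_scaled_sqr 1 s a_gt0).
have le1 := ler_wpM2l (mulr_ge0 r_ge0 w1_ge0) (mulr2_le_scaled_sqr s 1 a_gt0).
have rest : 0 <= (r * w0 + r * s ^+ 2 * w1) / a.
  apply: divr_ge0 (ltW a_gt0); apply: addr_ge0; first exact: mulr_ge0.
  exact: mulr_ge0 (mulr_ge0 r_ge0 (sqr_ge0 s)) w1_ge0.
rewrite expr1n in le0 le1; lra.
Qed.

Lemma sum_affine (F : fieldType) (I : finType) (a : F) (u v : I -> F) :
  \sum_(j : I) (a * u j + v j / a) = a * \sum_j u j + (\sum_j v j) / a.
Proof. by rewrite big_split -mulr_sumr -mulr_suml. Qed.

Section ChangeOfMeasure.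
Variables (R : realType) (n : nat) (p : R) (A : policy R n).
Hypotheses (p_gt0 : 0 < p) (p_lt1 : p < 1) (A_valid : valid_policy A).
Variables (x y : input n) (i : 'I_n).
Hypotheses (y_i : y i = ~~ x i) (y_j : forall j, j != i -> y j = x j).
Implicit Types (t : seq (obs n)) (o : obs n).

(* ln (P_x(o) / P_y(o)): only answers to queries of i carry information *)
Definition llr o : R :=
  if o.1 == i then (if o.2 == x i then ln ((1 - p) / p) else - ln ((1 - p) / p)) else 0.

Definition llr_sum t := \sum_(o <- t) llr o.

Lemma chan_llr o : chan p y o = chan p x o * expR (- llr o).
Proof.
have odds_gt0 : 0 < (1 - p) / p by rewrite divr_gt0 // subr_gt0.
have p_neq0 : p != 0 by rewrite gt_eqF.
have q_neq0 : 1 - p != 0 by rewrite gt_eqF // subr_gt0.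
case: o => j b; rewrite /chan /llr /=.
have [->|ne_ji] := eqVneq j i; last by rewrite y_j // oppr0 expR0 mulr1.
rewrite y_i; case: (x i); case: b => /=; rewrite ?opprK ?expRN lnK ?posrE //;
  by field; rewrite ?p_neq0 ?q_neq0.
Qed.

Lemma reach_llr t : reach p A y t = reach p A x t * expR (- llr_sum t).
Proof.
rewrite /reach /llr_sum; move: [::]; elim: t => [|o t IH] pre /=.
  by rewrite big_nil oppr0 expR0 mulr1.
by rewrite IH chan_llr big_cons opprD expRD; ring.
Qed.

Lemma llr_sum_rcons t o : llr_sum (rcons t o) = llr_sum t + llr o.
Proof. by rewrite /llr_sum big_rcons. Qed.

Lemma mean_llr j :
  \sum_(b : bool) chan p x (j, b) * llr (j, b) = if j == i then DKL p else 0.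
Proof.
rewrite big_bool /chan /llr /=.
have [->|_] := eqVneq j i; last by rewrite !mulr0 addr0.
by rewrite /DKL; case: (x i) => /=; ring.
Qed.

(* E_x[G(H)], where H is the history at time min(M, N) *)
Definition stopped_mean N (G : seq (obs n) -> R) :=
  \sum_(m < N) \sum_(t : m.-tuple (obs n)) reach p A x t * stop_mass A t * G t +
  \sum_(t : N.-tuple (obs n)) reach p A x t * G t.

Lemma stopped_mean1 N : stopped_mean N (fun=> 1) = 1.
Proof.
rewrite -[RHS](sum_P_stopD_survival p A_valid x N) /stopped_mean /survival.
congr (_ + _); last by under eq_bigr do rewrite mulr1.
by apply: eq_bigr => m _; rewrite P_stopE; under eq_bigr do rewrite mulr1.
Qed.

Lemma le_stopped_mean N G1 G2 :
  (forall t, G1 t <= G2 t) -> stopped_mean N G1 <= stopped_mean N G2.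
Proof.
move=> le_G; have reach_ge0 := reach_ge0 p_gt0 p_lt1 A_valid x.
rewrite lerD ?ler_sum // => [m _|t _]; last by rewrite ler_wpM2l.
rewrite ler_sum // => t _; rewrite ler_wpM2l // mulr_ge0 //.
by rewrite addr_ge0 ?(policy_ge0 A_valid).
Qed.

Lemma stopped_mean_affine N a b G :
  stopped_mean N (fun t => a + b * G t) = a + b * stopped_mean N G.
Proof.
rewrite -[a in RHS]mulr1 -(stopped_mean1 N) /stopped_mean !mulrDr !mulr_sumr.
rewrite addrACA -!big_split; congr (_ + _); last by apply: eq_bigr => t _ /=; ring.
apply: eq_bigr => m _; rewrite !mulr_sumr -big_split.
by apply: eq_bigr => t _ /=; ring.
Qed.

Lemma stopped_meanS N G : stopped_mean N.+1 G = stopped_mean N G +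
  \sum_(t : N.-tuple (obs n)) reach p A x t *
     \sum_o A t (inr o.1) * chan p x o * (G (rcons t o) - G t).
Proof.
rewrite /stopped_mean big_ord_recr /= sum_reach_recr -!addrA; congr (_ + _).
rewrite -!big_split; apply: eq_bigr => t _ /=.
have query_G : \sum_o A t (inr o.1) * chan p x o * G t = query_mass A t * G t.
  rewrite (sum_obsE p A x t (fun=> G t)) /query_mass mulr_suml.
  by apply: eq_bigr => j _; rewrite -mulr_suml sum_chan mul1r.
under [in RHS]eq_bigr do rewrite mulrBr; rewrite sumrB query_G.
rewrite -[query_mass A t](addKr (stop_mass A t)) stop_massD_query_mass //; ring.
Qed.

(* Wald's identity for the log-likelihood ratio *)
Lemma stopped_mean_llr N : stopped_mean N llr_sum = DKL p * query_count p A x i N.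
Proof.
elim: N => [|N IH].
  rewrite /stopped_mean /query_count !big_ord0 add0r mulr0.
  by rewrite (sum_tuple0 (fun t => reach p A x t * llr_sum t)) /llr_sum big_nil mulr0.
rewrite stopped_meanS IH /query_count big_ord_recr /= mulrDr; congr (_ + _).
rewrite mulr_sumr; apply: eq_bigr => t _; rewrite mulrCA; congr (_ * _).
under eq_bigr do rewrite llr_sum_rcons addrAC subrr add0r.
rewrite sum_obsE (bigD1 i) //= mean_llr eqxx mulrC big1 ?addr0 // => j /negbTE ne_ji.
by rewrite mean_llr ne_ji mulr0.
Qed.

Lemma expR_le_stopped_mean N :
  expR (- (DKL p * query_count p A x i N) / 2) <=
  stopped_mean N (fun t => expR (- llr_sum t / 2)).
Proof.
set mu := DKL p * query_count p A x i N; set c := expR (- mu / 2).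
have tangent t : c * (1 + mu / 2) + (- c / 2) * llr_sum t <= expR (- llr_sum t / 2).
  have -> : expR (- llr_sum t / 2) = c * expR (- llr_sum t / 2 + mu / 2).
    by rewrite -expRD; congr expR; ring.
  have := ler_wpM2l (ltW (expR_gt0 (- mu / 2))) (expR_ge1Dx (- llr_sum t / 2 + mu / 2)).
  rewrite -/c; lra.
apply: le_trans (le_stopped_mean N tangent).
by rewrite stopped_mean_affine stopped_mean_llr -/mu; lra.
Qed.

Lemma sum_stopped_masses N :
  \sum_(m < N) \sum_(t : m.-tuple (obs n)) (reach p A x t + reach p A y t) * stop_mass A t +
  \sum_(t : N.-tuple (obs n)) (reach p A x t + reach p A y t) = 2.
Proof.
have mass z : \sum_(m < N) \sum_(t : m.-tuple (obs n)) reach p A z t * stop_mass A t +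
    survival p A z N = 1.
  rewrite -(sum_P_stopD_survival p A_valid z N); congr (_ + _).
  by apply: eq_bigr => m _; rewrite P_stopE.
have split_x_y :
    \sum_(m < N) \sum_(t : m.-tuple (obs n)) (reach p A x t + reach p A y t) * stop_mass A t =
    \sum_(m < N) \sum_(t : m.-tuple (obs n)) reach p A x t * stop_mass A t +
    \sum_(m < N) \sum_(t : m.-tuple (obs n)) reach p A y t * stop_mass A t.
  rewrite -big_split; apply: eq_bigr => m _; rewrite -big_split.
  by apply: eq_bigr => t _; rewrite mulrDl.
rewrite split_x_y big_split /= -/(survival p A x N) -/(survival p A y N).
have := mass x; have := mass y; lra.
Qed.

(* Le Cam's two-point method: b is the answer that is wrong on x and right on y; the runs
   not stopped after N queries are counted as errors on x. *)
Lemma le_cam_bound N (b : bool) a : 0 < a ->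
  2 * stopped_mean N (fun t => expR (- llr_sum t / 2)) <=
  a * (\sum_(m < N) P_stop_out p A x m (~~ b) + \sum_(m < N) P_stop_out p A y m b +
       survival p A x N) + 2 / a.
Proof.
move=> a_gt0; set s := fun t => expR (- llr_sum t / 2).
have reach_ge0 := reach_ge0 p_gt0 p_lt1 A_valid.
have reach_y t : reach p A y t = reach p A x t * s t ^+ 2.
  by rewrite reach_llr expr2 -expRD; congr (_ * expR _); field.
have stop_term t : 2 * (reach p A x t * stop_mass A t * s t) <=
    a * (reach p A x t * A t (inl (~~ b)) + reach p A y t * A t (inl b)) +
    (reach p A x t + reach p A y t) * stop_mass A t / a.
  have -> : stop_mass A t = A t (inl (~~ b)) + A t (inl b).
    by rewrite /stop_mass; case: b => //; rewrite addrC.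
  by rewrite reach_y two_point_amgm ?(policy_ge0 A_valid).
have trunc_term t : 2 * (reach p A x t * s t) <=
    a * reach p A x t + (reach p A x t + reach p A y t) / a.
  have := two_point_amgm (s t) (reach_ge0 x t) ler01 (lexx 0) a_gt0.
  by rewrite reach_y !(addr0, mulr0, mulr1).
rewrite /stopped_mean mulrDr !mulr_sumr; under eq_bigr do rewrite mulr_sumr.
apply: le_trans.
  apply: lerD; apply: ler_sum => m _; first by apply: ler_sum => t _; apply: stop_term.
  exact: trunc_term.
under eq_bigr do rewrite sum_affine; rewrite !sum_affine.
have err_sum : \sum_(m < N) \sum_(t : m.-tuple _)
    (reach p A x t * A t (inl (~~ b)) + reach p A y t * A t (inl b)) =
    \sum_(m < N) P_stop_out p A x m (~~ b) + \sum_(m < N) P_stop_out p A y m b.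
  by rewrite -big_split; apply: eq_bigr => m _; rewrite big_split.
rewrite err_sum -/(survival p A x N) -[X in _ <= _ + X / a](sum_stopped_masses N) mulrDl.
lra.
Qed.

Lemma two_point_bound N (b : bool) :
  expR (- (DKL p * query_count p A x i N)) <=
  2 * (\sum_(m < N) P_stop_out p A x m (~~ b) + \sum_(m < N) P_stop_out p A y m b +
       survival p A x N).
Proof.
set err := _ + _ + _; set mu := DKL p * _.
set bc := stopped_mean N (fun t => expR (- llr_sum t / 2)).
have bc_ge : expR (- mu / 2) <= bc := expR_le_stopped_mean N.
have bc_gt0 : 0 < bc := lt_le_trans (expR_gt0 _) bc_ge.
have cam := le_cam_bound N b (divr_gt0 (ltr0Sn R 1) bc_gt0).
have bc_inv : 2 / (2 / bc) = bc by field; rewrite gt_eqF.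
rewrite -/bc -/err bc_inv in cam.
have bc_sqr : bc * bc <= 2 * err by rewrite -ler_pdivlMr // mulrAC; lra.
have -> : expR (- mu) = expR (- mu / 2) * expR (- mu / 2) by rewrite -expRD; congr expR; field.
by apply: le_trans bc_sqr; rewrite ler_pM ?expR_ge0.
Qed.

End ChangeOfMeasure.

Section ThresholdInputs.
Variable n : nat.
Implicit Types (x : input n) (i j : 'I_n).

Definition ones_input m : input n := [ffun j : 'I_n => (j < m)%N].
Definition raise x i : input n := [ffun j => (j == i) || x j].

Lemma card_ones x : #|[pred j | x j]| = (\sum_(j < n) x j)%N.
Proof. by rewrite -sum1_card big_mkcond; apply: eq_bigr => j _; rewrite inE; case: (x j). Qed.

Lemma card_zeros x : #|[pred j | ~~ x j]| = (n - \sum_(j < n) x j)%N.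
Proof.
have := cardC [pred j | x j]; rewrite card_ord => card_n.
by rewrite -card_ones -[X in (X - _)%N]card_n addKn.
Qed.

Lemma sum_ones_input m : (m <= n)%N -> (\sum_(j < n) ones_input m j)%N = m.
Proof.
move=> le_mn; under eq_bigr do rewrite ffunE.
rewrite -(big_mkord xpredT (fun l : nat => nat_of_bool (l < m)%N)) (big_cat_nat (leq0n m) le_mn) /=.
rewrite (eq_big_nat _ _ (F2 := fun=> 1%N)) => [|l /andP[_ ->] //].
rewrite (eq_big_nat _ _ (F1 := fun l => nat_of_bool (l < m)%N) (F2 := fun=> 0%N)).
  by rewrite !sum_nat_const_nat muln1 muln0 addn0 subn0.
by move=> l /andP[le_ml _]; rewrite ltnNge le_ml.
Qed.

Lemma raise_at x i : x i = false -> raise x i i = ~~ x i.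
Proof. by move=> ->; rewrite ffunE eqxx. Qed.

Lemma raise_neq x i j : j != i -> raise x i j = x j.
Proof. by rewrite ffunE => /negbTE->. Qed.

Lemma sum_raise x i : x i = false ->
  (\sum_(j < n) raise x i j)%N = (\sum_(j < n) x j).+1.
Proof.
move=> x_i; rewrite (bigD1 i) //= [in RHS](bigD1 i) //= raise_at x_i //=.
by congr S; apply: eq_bigr => j /raise_neq->.
Qed.

End ThresholdInputs.

Lemma DKL_gt0 (R : realType) (p : R) : 0 < p < 1 / 2 -> 0 < DKL p.
Proof.
move=> /andP[p_gt0 p_lt_half]; rewrite /DKL mulr_gt0 //; first lra.
by rewrite ln_gt0 // ltr_pdivlMr //; lra.
Qed.

Lemma expRN_ge_of_budget (R : realType) (c D q delta : R) :
  0 < c -> 0 < D -> 0 < delta ->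
  c * q <= c * ln (1 / (4 * delta)) / D -> 4 * delta <= expR (- (D * q)).
Proof.
move=> c_gt0 D_gt0 delta_gt0; rewrite -mulrA ler_pM2l // ler_pdivlMr // mulrC => le_Dq.
have -> : 4 * delta = expR (- ln (1 / (4 * delta))).
  by rewrite div1r lnV ?posrE ?mulr_gt0 // opprK lnK // posrE mulr_gt0.
by rewrite ler_expR lerN2.
Qed.

Theorem proposition5 (R : realType) (p : R) (n k : nat) (delta : R)
  (A : policy R n) :
  0 < p < 1 / 2 ->
  (1 <= k)%N -> (k <= n)%N ->
  0 < delta < 1 ->
  valid_policy A ->
  (forall x : input n,
     (expected_queries p A x <= ((n - k + 1)%:R * ln (1 / (4 * delta)) / DKL p)%:E)%E) ->
  exists x : input n, (delta%:E <= Perr p A k x)%E.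
Proof.
move=> p_bounds k_gt0 le_kn /andP[delta_gt0 _] A_valid EM_le.
have [p_gt0 p_lt1] : 0 < p /\ p < 1 by case/andP: p_bounds; split; lra.
apply: contrapT => no_witness.
have [g g_gt0 Perr_le] : exists2 g, 0 < g & forall x, (Perr p A k x <= (delta - g)%:E)%E.
  apply: ereal_uniform_gap (ones_input n 0) _ => x.
  by rewrite ltNge; apply/negP => le_Perr; apply: no_witness; exists x.
have lt_kn : (k.-1 < n)%N by rewrite prednK.
pose x := ones_input n k.-1; pose zeros := [pred j | ~~ x j].
have sum_x : (\sum_(j < n) x j)%N = k.-1 by rewrite sum_ones_input // ltnW.
have [N surv_N] := survival_vanishes p_gt0 p_lt1 A_valid EM_le x (divr_gt0 g_gt0 (ltr0Sn R 1)).
have [|i x_i i_rare] :=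
  exists_rare_query p_gt0 p_lt1 A_valid EM_le x N (S := zeros) (j0 := Ordinal lt_kn).
  by rewrite inE ffunE ltnn.
have {}x_i : x i = false by apply: negbTE.
have card_zeros_x : #|zeros| = (n - k + 1)%N.
  by rewrite card_zeros sum_x -subn1 subnBA // addnBAC.
rewrite card_zeros_x addn1 in i_rare.
have := two_point_bound p_gt0 p_lt1 A_valid (raise_at x_i) (@raise_neq _ x i) N false.
have := expRN_ge_of_budget (ltr0Sn R _) (DKL_gt0 p_bounds) delta_gt0 i_rare.
have TH_x : TH k x = false by rewrite /TH sum_x leqNgt ltn_predL k_gt0.
have TH_y : TH k (raise x i) by rewrite /TH sum_raise // sum_x prednK.
have := le_trans (Perr_ge_sum p_gt0 p_lt1 A_valid k x N) (Perr_le x).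
have := le_trans (Perr_ge_sum p_gt0 p_lt1 A_valid k (raise x i) N) (Perr_le (raise x i)).
rewrite TH_x TH_y !lee_fin; lra.
Qed.
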